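(* Let $p$ be a prime, let $s\geq 2$, and let $t_1\geq 1,t_2,\dots,t_s$ be nonnegative integers with $t_s\geq 1$. Then the $\mathbb{Z}_{p^s}$-linear GH code $H^{t_1,\dots,t_s}$ is equivalent to the $\mathbb{Z}_{p^{s+\ell}}$-linear GH code $H^{1,\mathbf{0}^{\ell-1},t_1-1,t_2,\dots,t_{s-1},t_s-\ell}$ for every $\ell\in\{1,\dots,t_s\}$, where $\mathbf{0}^{\ell-1}$ denotes a string of $\ell-1$ zeros (so the superscript is an $(s+\ell)$-tuple).
   Context: Let $p$ be prime. For $s\geq 1$ and $u\in\mathbb{Z}_{p^s}$ with $p$-ary expansion $u=\sum_{i=0}^{s-1}u_ip^i$, $u_i\in\{0,\dots,p-1\}$, the Gray map $\phi_s:\mathbb{Z}_{p^s}\to\mathbb{Z}_p^{p^{s-1}}$ is $\phi_s(u)=(u_{s-1},\dots,u_{s-1})+(u_0,\dots,u_{s-2})Y_{s-1}$, where $Y_1=(0\ 1\ \cdots\ p-1)$ and, for $k\geq 2$, $Y_k$ is the $k\times p^k$ matrix whose first $k-1$ rows are $(Y_{k-1}\ Y_{k-1}\ \cdots\ Y_{k-1})$ ($p$ copies) and whose last row is $(0,\dots,0,1,\dots,1,\dots,p-1,\dots,p-1)$ (constant blocks of length $p^{k-1}$); $\phi_1$ is the identity. $\Phi_s:\mathbb{Z}_{p^s}^n\to\mathbb{Z}_p^{np^{s-1}}$ applies $\phi_s$ to each coordinate and concatenates. For $1\le i\le s$ let $T_i=\{jp^{i-1}: 0\le j\le p^{s-i+1}-1\}\subseteq\mathbb{Z}_{p^s}$.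 For nonnegative integers $t_1\geq1,t_2,\dots,t_s$, $A^{t_1,\dots,t_s}$ is the matrix over $\mathbb{Z}_{p^s}$ whose columns are all vectors $\mathbf{z}^T$ with $\mathbf{z}\in\{1\}\times T_1^{t_1-1}\times T_2^{t_2}\times\cdots\times T_s^{t_s}$; $\mathcal{H}^{t_1,\dots,t_s}$ is the subgroup of $\mathbb{Z}_{p^s}^n$ generated by its rows, and $H^{t_1,\dots,t_s}=\Phi_s(\mathcal{H}^{t_1,\dots,t_s})$, called a $\mathbb{Z}_{p^s}$-linear GH (generalized Hadamard) code; it is a code over $\mathbb{Z}_p$ of length $p^t$ with $t=\sum_{i=1}^s(s-i+1)t_i-1$. Two codes $C_1,C_2\subseteq\mathbb{Z}_p^N$ are equivalent if there exist $\mathbf{a}\in\mathbb{Z}_p^N$ and a coordinate permutation $\pi$ with $C_2=\{\mathbf{a}+\pi(\mathbf{c}):\mathbf{c}\in C_1\}$. *)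

From HB Require Import structures.
From mathcomp Require Import all_boot all_order all_algebra.
Set Implicit Arguments. Unset Strict Implicit. Unset Printing Implicit Defensive.
Import GRing.Theory.
Local Open Scope ring_scope.

Definition digit (p i u : nat) : nat := ((u %/ p ^ i) %% p)%N.

(* (Y_k)_{i,j} (0-indexed), following the recursive definition:
   Y_1 = (0 1 ... p-1); for k >= 2 the first k-1 rows are p copies of
   Y_{k-1} and the last row is constant blocks of length p^(k-1). *)
Fixpoint Yent (p k i j : nat) : nat :=
  match k with
  | 0 => 0%N
  | k'.+1 => if (i < k')%N then Yent p k' i (j %% p ^ k') else (j %/ p ^ k')%N
  end.

(* nat-indexed access to a row vector (0 outside the range) *)
Definition rv_nth (R : nmodType) (n : nat) (v : 'rV[R]_n) (j : nat) : R :=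
  match @insub _ (fun k => (k < n)%N) 'I_n j with Some j' => v 0 j' | None => 0 end.

(* Gray map phi_s : Z_{p^s} -> Z_p^{p^{s-1}}, u given by its value in [0,p^s) *)
Definition gray (p s u : nat) : 'rV['Z_p]_(p ^ s.-1) :=
  \row_j ((digit p s.-1 u + \sum_(i < s.-1) digit p i u * Yent p s.-1 i j)%N%:R).

(* Phi_s applied coordinatewise and concatenated *)
Definition Phi (p s n : nat) (v : 'rV['Z_(p ^ s)]_n) : 'rV['Z_p]_(n * p ^ s.-1) :=
  \row_k rv_nth (gray p s (val (rv_nth v (k %/ p ^ s.-1))))  (k %% p ^ s.-1).

Definition Tset (p s i : nat) : seq nat :=
  [seq (j * p ^ i.-1)%N | j <- iota 0 (p ^ (s - i).+1)].

(* ranges of the coordinates of the columns: {1} x T_1^(t1-1) x T_2^t2 x ... x T_s^ts,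
   where ts = [:: t_1; ...; t_s] and s = size ts *)
Definition coord_ranges (p : nat) (ts : seq nat) : seq (seq nat) :=
  let s := size ts in
  [:: 1%N] :: nseq (head 0%N ts).-1 (Tset p s 1)
    ++ flatten [seq nseq (nth 0%N ts i) (Tset p s i.+1) | i <- iota 1 s.-1].

Definition columns (p : nat) (ts : seq nat) : seq (seq nat) :=
  foldr (fun L acc => [seq x :: a | x <- L, a <- acc]) [:: [::]] (coord_ranges p ts).

Definition GHmat (p : nat) (ts : seq nat) :
  'M['Z_(p ^ size ts)]_(sumn ts, size (columns p ts)) :=
  \matrix_(i, j) (nth 0%N (nth [::] (columns p ts) j) i)%:R.

Definition GHlin (p : nat) (ts : seq nat) : {set 'rV['Z_(p ^ size ts)]_(size (columns p ts))} :=
  [set c *m GHmat p ts | c : 'rV_(sumn ts)].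

Definition GH (p : nat) (ts : seq nat) :
  {set 'rV['Z_p]_(size (columns p ts) * p ^ (size ts).-1)} :=
  [set Phi v | v in GHlin p ts].

Definition equiv_codes (p N1 N2 : nat) (C1 : {set 'rV['Z_p]_N1}) (C2 : {set 'rV['Z_p]_N2}) : Prop :=
  exists (a : 'rV['Z_p]_N2) (f : 'I_N2 -> 'I_N1),
    bijective f /\ C2 = [set a + \row_i c 0 (f i) | c : 'rV['Z_p]_N1 in C1].

From mathcomp Require Import all_boot all_order all_algebra zify.
Set Implicit Arguments. Unset Strict Implicit. Unset Printing Implicit Defensive.
Import GRing.Theory.

(* By induction on l it suffices to show that H^{t_1,...,t_s} over Z_{p^s} is
   equivalent to H^{1,t_1-1,t_2,...,t_s-1} over Z_{p^(s+1)}.  Since p T_i = T_{i+1},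
   both generator matrices are built on the same block W of coordinates: the
   columns of the first are (1, w, x p^(s-1)) with x < p, those of the second are
   (1, p w).  At the column (1, p w) a codeword of the second code takes a value
   u = a + p X with a < p, and coordinate y_0 + p y' of phi_{s+1}(u) equals, mod p,
   coordinate y' of phi_s(X + a y_0 p^(s-1)): the lowest digit a of u contributes
   exactly a y_0, which is what the last coordinate x = y_0 of the first code
   contributes when its coefficient is a.  So the coefficient changes
   d |-> (d_0 / p, d_1, ..., d_0 mod p) and back match the two codes up to the
   coordinate permutation (w, y_0 + p y') |-> ((w, y_0), y'). *)

Section Digits.

Variable p : nat.
Hypothesis p_gt0 : 0 < p.

Lemma digit0 u : digit p 0 u = u %% p.
Proof. by rewrite /digit expn0 divn1. Qed.

Lemma digitS i u : digit p i.+1 u = digit p i (u %/ p).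
Proof. by rewrite /digit expnS divnMA. Qed.

Lemma digit0_addM a X : a < p -> digit p 0 (a + p * X) = a.
Proof. by move=> ltap; rewrite digit0 addnC mulnC modnMDl modn_small. Qed.

Lemma digitS_addM i a X : a < p -> digit p i.+1 (a + p * X) = digit p i X.
Proof. by move=> ltap; rewrite digitS mulnC divnDMl // divn_small. Qed.

Lemma digit_addMX_lt i j u b : i < j -> digit p i (u + b * p ^ j) = digit p i u.
Proof.
move=> ltij; have -> : b * p ^ j = b * p ^ (j - i.+1) * p * p ^ i.
  by rewrite -!mulnA -expnS -expnD subnK.
by rewrite /digit divnDMl ?expn_gt0 ?p_gt0 // addnC modnMDl.
Qed.

Lemma digit_addMX j u b : digit p j (u + b * p ^ j) = (u %/ p ^ j + b) %% p.
Proof. by rewrite /digit divnDMl // expn_gt0 p_gt0. Qed.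

Lemma digit_modX i s u : i < s -> digit p i (u %% p ^ s) = digit p i u.
Proof. by move=> lti; rewrite {2}(divn_eq u (p ^ s)) addnC digit_addMX_lt. Qed.

Lemma Yent_digit k i j : i < k -> j < p ^ k -> Yent p k i j = digit p i j.
Proof.
elim: k i j => [//|k IHk] i j /= ltik ltj.
have [ltik' | leki] := ltnP i k.
  by rewrite IHk ?ltn_pmod ?expn_gt0 ?p_gt0 // digit_modX.
have -> : i = k by apply/eqP; rewrite eqn_leq leki andbT -ltnS.
by rewrite /digit modn_small // ltn_divLR ?expn_gt0 ?p_gt0 // -expnS.
Qed.

End Digits.

Definition gray_value (p s u y : nat) : nat :=
  digit p s.-1 u + \sum_(i < s.-1) digit p i u * digit p i y.

Section GrayValue.

Variable p : nat.
Hypothesis p_gt0 : 0 < p.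

Lemma gray_value_eqmod s u v y :
  u = v %[mod p ^ s.+1] -> gray_value p s.+1 u y = gray_value p s.+1 v y.
Proof.
move=> euv; have digitE i : i < s.+1 -> digit p i u = digit p i v.
  by move=> lti; rewrite -(digit_modX p_gt0 u lti) euv digit_modX.
rewrite /gray_value digitE //; congr (_ + _); apply: eq_bigr => i _.
by rewrite digitE // ltnS ltnW.
Qed.

Lemma gray_value_shift n a X y : a < p ->
  gray_value p n.+2 (a + p * X) y =
  gray_value p n.+1 (X + a * (y %% p) * p ^ n) (y %/ p) %[mod p].
Proof.
move=> ltap; rewrite /gray_value /= digitS_addM // big_ord_recl /= digit0_addM //.
under eq_bigr => i _ do rewrite digitS_addM // digitS.
rewrite digit_addMX //.
under [in RHS]eq_bigr => i _ do rewrite digit_addMX_lt //.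
by rewrite digit0 !modnDml addnA.
Qed.

End GrayValue.

Definition dotn (C : nat -> nat) (w : seq nat) : nat := \sum_(i < size w) C i * nth 0 w i.

Lemma dotn_cons C x w : dotn C (x :: w) = C 0 * x + dotn (C \o succn) w.
Proof. by rewrite /dotn big_ord_recl. Qed.

Lemma dotn_rcons C w x : dotn C (rcons w x) = dotn C w + C (size w) * x.
Proof.
rewrite /dotn size_rcons big_ord_recr /= nth_rcons ltnn eqxx; congr (_ + _).
by apply: eq_bigr => i _; rewrite nth_rcons ltn_ord.
Qed.

Lemma dotn_map_muln C p w : dotn C (map (muln p) w) = p * dotn C w.
Proof.
rewrite /dotn size_map big_distrr; apply: eq_bigr => i _.
by rewrite (nth_map 0) // mulnCA.
Qed.

Lemma eq_dotn_mod C C' w d : (forall i, i < size w -> C i = C' i %[mod d]) ->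
  dotn C w = dotn C' w %[mod d].
Proof.
move=> eCC'; rewrite /dotn -modn_summ -[in RHS]modn_summ; congr (_ %% _).
by apply: eq_bigr => i _; rewrite -modnMml eCC' // modnMml.
Qed.

Definition cartprod (T : Type) (Rs : seq (seq T)) : seq (seq T) :=
  foldr (fun L acc => [seq x :: a | x <- L, a <- acc]) [:: [::]] Rs.

Lemma columnsE p ts : columns p ts = cartprod (coord_ranges p ts).
Proof. by []. Qed.

Lemma cartprod_cons1 (T : Type) (x : T) Rs :
  cartprod ([:: x] :: Rs) = map (cons x) (cartprod Rs).
Proof. by rewrite /= cats0. Qed.

Lemma cartprod_map (T U : Type) (f : T -> U) Rs :
  cartprod (map (map f) Rs) = map (map f) (cartprod Rs).
Proof.
elim: Rs => [//|L Rs IHRs] /=.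
by rewrite -/(cartprod _) IHRs allpairs_mapl allpairs_mapr map_allpairs.
Qed.

Lemma cartprod_rcons (T : Type) Rs (L : seq T) :
  cartprod (rcons Rs L) = [seq rcons a x | a <- cartprod Rs, x <- L].
Proof.
elim: Rs => [|R Rs IHRs] /=; first by rewrite cats0; elim: L => //= x L ->.
rewrite -/(cartprod _) IHRs -/(cartprod Rs).
elim: R => [//|x R IHR] /=.
by rewrite IHR allpairs_cat map_allpairs allpairs_mapl.
Qed.

Lemma size_mem_cartprod (T : eqType) Rs (a : seq T) : a \in cartprod Rs -> size a = size Rs.
Proof.
elim: Rs a => [|L Rs IHRs] a /=; first by rewrite inE => /eqP ->.
by case/allpairsP => -[x b] [_ /= /IHRs <- ->].
Qed.

Lemma nth_allpairs (S T U : Type) (f : S -> T -> U) x0 y0 z0 (xs : seq S) (ys : seq T) i j :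
  i < size xs -> j < size ys ->
  nth z0 [seq f x y | x <- xs, y <- ys] (i * size ys + j) = f (nth x0 xs i) (nth y0 ys j).
Proof.
elim: xs i => [//|x xs IHxs] [|i] /= ltis ltj.
  by rewrite nth_cat size_map ltj (nth_map y0).
by rewrite nth_cat size_map mulSn -addnA ltnNge leq_addr addKn IHxs.
Qed.

Lemma Tset_shift p s i : 0 < i -> Tset p s.+1 i.+1 = map (muln p) (Tset p s i).
Proof.
case: i => [//|i] _; rewrite /Tset -map_comp subSS; apply: eq_map => j /=.
by rewrite expnS mulnCA.
Qed.

Lemma Tset_last p s : Tset p s s = [seq j * p ^ s.-1 | j <- iota 0 p].
Proof. by rewrite /Tset subnn expn1. Qed.

Lemma size_coord_ranges p ts : 0 < head 0 ts -> size (coord_ranges p ts) = sumn ts.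
Proof.
case: ts => [//|t ts] /= t_gt0; rewrite size_cat size_nseq size_flatten /shape -map_comp.
rewrite (iotaDl 1 0) -map_comp (eq_map (g := nth 0 ts)) => [|i] /=; last by rewrite size_nseq.
by rewrite -/(mkseq _ _) mkseq_nth -addSn prednK.
Qed.

Definition common_ranges p t1 (mid : seq nat) tlast : seq (seq nat) :=
  nseq t1.-1 (Tset p (size mid).+2 1) ++
  flatten [seq nseq (nth 0 mid i) (Tset p (size mid).+2 i.+2) | i <- iota 0 (size mid)] ++
  nseq tlast.-1 (Tset p (size mid).+2 (size mid).+2).

Lemma coord_ranges_rcons p t1 mid tlast : 0 < tlast ->
  coord_ranges p (t1 :: rcons mid tlast) =
  [:: 1] :: rcons (common_ranges p t1 mid tlast) (Tset p (size mid).+2 (size mid).+2).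
Proof.
move=> tlast_gt0; rewrite /coord_ranges /= size_rcons; congr (_ :: _).
rewrite /common_ranges !rcons_cat; congr (_ ++ _).
rewrite -[(size mid).+1]addn1 iotaD map_cat flatten_cat; congr (_ ++ _).
  rewrite (iotaDl 1 0) -map_comp; congr flatten; apply/eq_in_map => i.
  by rewrite mem_iota /= => ltim; rewrite nth_rcons ltim.
rewrite /= cats0 add1n nth_rcons ltnn eqxx addn1 -cats1 -[tlast in LHS](prednK tlast_gt0).
by rewrite -addn1 nseqD.
Qed.

Lemma coord_ranges_lift p t1 mid tlast :
  coord_ranges p (1 :: t1.-1 :: rcons mid tlast.-1) =
  [:: 1] :: map (map (muln p)) (common_ranges p t1 mid tlast).
Proof.
rewrite /coord_ranges /= size_rcons; congr (_ :: _).
rewrite /common_ranges !map_cat map_nseq Tset_shift //; congr (_ ++ _).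
rewrite -(addn1 (size mid)) iotaD map_cat flatten_cat map_flatten; congr (_ ++ _).
  rewrite (iotaDl 2 0) -!map_comp; congr flatten; apply/eq_in_map => i.
  by rewrite mem_iota /= => ltim; rewrite nth_rcons ltim map_nseq Tset_shift.
by rewrite /= cats0 add2n addn1 nth_rcons ltnn eqxx map_nseq Tset_shift.
Qed.

Lemma rv_nth_lt (R : nmodType) n (v : 'rV[R]_n) j (ltjn : j < n) :
  rv_nth v j = v ord0 (Ordinal ltjn).
Proof. by rewrite /rv_nth insubT. Qed.

Lemma rv_nth_ord (R : nmodType) n (v : 'rV[R]_n) (i : 'I_n) : rv_nth v i = v ord0 i.
Proof. by rewrite (rv_nth_lt v (ltn_ord i)); congr (v ord0 _); apply: val_inj. Qed.

Definition coefn N n (c : 'rV['Z_N]_n) (i : nat) : nat := rv_nth c i.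

Lemma coefn_row N n (F : nat -> nat) j : 1 < N -> j < n ->
  coefn (\row_(i < n) (F i)%:R%R : 'rV['Z_N]_n) j = F j %% N.
Proof. by move=> N_gt1 ltjn; rewrite /coefn (rv_nth_lt _ ltjn) mxE val_Zp_nat. Qed.

Lemma gray_entry p s u (j : 'I_(p ^ s.-1)) : 0 < p ->
  gray p s u ord0 j = ((gray_value p s u j)%:R)%R.
Proof.
move=> p_gt0; rewrite mxE /gray_value; congr ((_ + _)%:R)%R; apply: eq_bigr => i _.
by rewrite Yent_digit.
Qed.

Lemma Phi_entry p s n (v : 'rV['Z_(p ^ s)]_n) (k : 'I_(n * p ^ s.-1)) : 0 < p ->
  Phi v ord0 k = (gray_value p s (rv_nth v (k %/ p ^ s.-1)) (k %% p ^ s.-1))%:R%R.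
Proof.
move=> p_gt0; have ltr : k %% p ^ s.-1 < p ^ s.-1 by rewrite ltn_pmod ?expn_gt0 ?p_gt0.
by rewrite mxE (rv_nth_lt _ ltr) gray_entry.
Qed.

Lemma size_nth_columns p ts j : 0 < head 0 ts -> j < size (columns p ts) ->
  size (nth [::] (columns p ts) j) = sumn ts.
Proof.
by move=> head_gt0 ltj; rewrite (size_mem_cartprod (mem_nth _ ltj)) size_coord_ranges.
Qed.

Lemma val_mulmx_GHmat p ts c (j : 'I_(size (columns p ts))) : 1 < p -> 0 < head 0 ts ->
  val ((c *m GHmat p ts)%R ord0 j) =
  dotn (coefn c) (nth [::] (columns p ts) j) %% p ^ size ts.
Proof.
case: ts c j => [//|t ts] c j p_gt1 t_gt0.
have ltps : 1 < p ^ size (t :: ts) by rewrite -[1](exp1n (size ts).+1) ltn_exp2r.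
rewrite /dotn size_nth_columns //= -(val_Zp_nat ltps) !mxE natr_sum; congr val.
by apply: eq_bigr => i _; rewrite mxE natrM natr_Zp rv_nth_ord.
Qed.

Lemma Phi_mulmx_GHmat p ts c (k : 'I_(size (columns p ts) * p ^ (size ts).-1)) :
  1 < p -> 0 < head 0 ts ->
  Phi (c *m GHmat p ts)%R ord0 k =
  (gray_value p (size ts)
     (dotn (coefn c) (nth [::] (columns p ts) (k %/ p ^ (size ts).-1)))
     (k %% p ^ (size ts).-1))%:R%R.
Proof.
move=> p_gt1 head_gt0; have p_gt0 := ltnW p_gt1.
have ltq : k %/ p ^ (size ts).-1 < size (columns p ts) by rewrite ltn_divLR ?expn_gt0 ?p_gt0.
rewrite Phi_entry // (rv_nth_lt _ ltq) val_mulmx_GHmat //.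
case: ts c k head_gt0 ltq => [//|t ts] c k _ _ /=.
by rewrite (gray_value_eqmod p_gt0 _ (modn_mod _ _)).
Qed.

Lemma gray_value_column_shift p n (C D : nat -> nat) (w : seq nat) r : 0 < p ->
  C 0 = D 0 %/ p %[mod p ^ n.+1] -> C (size w).+1 = D 0 %[mod p] ->
  (forall i, i < size w -> C i.+1 = D i.+1 %[mod p ^ n.+1]) ->
  gray_value p n.+2 (dotn D (1 :: map (muln p) w)) r =
  gray_value p n.+1 (dotn C (1 :: rcons w (r %% p * p ^ n))) (r %/ p) %[mod p].
Proof.
move=> p_gt0 eC0 eClast eC.
set a := D 0 %% p; set X := D 0 %/ p + dotn (D \o succn) w.
have -> : dotn D (1 :: map (muln p) w) = a + p * X.
  rewrite dotn_cons dotn_map_muln muln1 mulnDr addnA {1}(divn_eq (D 0) p).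
  by rewrite [_ * p]mulnC [_ + a]addnC.
rewrite (gray_value_shift p_gt0 n X r (ltn_pmod (D 0) p_gt0)); congr (_ %% p).
apply: gray_value_eqmod => //.
have eX : X = C 0 + dotn (C \o succn) w %[mod p ^ n.+1].
  rewrite /X -modnDm -eC0 (@eq_dotn_mod (D \o succn) (C \o succn)) ?modnDm // => i lti.
  exact/esym/eC.
have ea : a * (r %% p) * p ^ n = C (size w).+1 * (r %% p * p ^ n) %[mod p ^ n.+1].
  rewrite mulnA expnS -!muln_modl; congr (_ * _).
  by rewrite /a modnMml -[in RHS]modnMml eClast modnMml.
by rewrite dotn_cons dotn_rcons muln1 addnA -modnDm eX ea modnDm.
Qed.

Lemma divnMD_small q r d : r < d -> (q * d + r) %/ d = q.
Proof. by move=> ltrd; rewrite divnMDl ?divn_small ?addn0 // (leq_ltn_trans _ ltrd). Qed.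

Lemma modnMD_small q r d : r < d -> (q * d + r) %% d = r.
Proof. by move=> ltrd; rewrite modnMDl modn_small. Qed.

Lemma eq_divn_modn m n d : m %/ d = n %/ d -> m %% d = n %% d -> m = n.
Proof. by move=> eq_div eq_mod; rewrite (divn_eq m d) (divn_eq n d) eq_div eq_mod. Qed.

Section ShuffleIndex.

Variables p P : nat.
Hypotheses (p_gt0 : 0 < p) (P_gt0 : 0 < P).

Definition shuffle_index (k : nat) : nat :=
  (k %/ (p * P) * p + k %% (p * P) %% p) * P + k %% (p * P) %/ p.

Lemma ltn_divn_modnM k : k %% (p * P) %/ p < P.
Proof. by rewrite ltn_divLR // [P * p]mulnC ltn_pmod // muln_gt0 p_gt0. Qed.

Lemma shuffle_index_divn k : shuffle_index k %/ P = k %/ (p * P) * p + k %% (p * P) %% p.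
Proof. by rewrite /shuffle_index divnMD_small ?ltn_divn_modnM. Qed.

Lemma shuffle_index_modn k : shuffle_index k %% P = k %% (p * P) %/ p.
Proof. by rewrite /shuffle_index modnMD_small ?ltn_divn_modnM. Qed.

Lemma shuffle_index_inj : injective shuffle_index.
Proof.
move=> k1 k2 eq_k.
have := congr1 (modn^~ P) eq_k; have := congr1 (divn^~ P) eq_k.
rewrite /= !shuffle_index_divn !shuffle_index_modn => eq_hi eq_rdiv.
have := congr1 (modn^~ p) eq_hi; have := congr1 (divn^~ p) eq_hi.
rewrite /= !divnMD_small ?modnMD_small ?ltn_pmod // => eq_q eq_rmod.
by apply: (eq_divn_modn eq_q); apply: (eq_divn_modn eq_rdiv eq_rmod).
Qed.

Lemma shuffle_index_lt N k : k < N * (p * P) -> shuffle_index k < N * p * P.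
Proof.
move=> ltk; have ltq : k %/ (p * P) < N by rewrite ltn_divLR // muln_gt0 p_gt0.
have ltr0 : k %% (p * P) %% p < p by rewrite ltn_pmod.
have ltr1 := ltn_divn_modnM k.
rewrite /shuffle_index; nia.
Qed.

End ShuffleIndex.

Lemma GH_imset p ts : GH p ts = [set Phi (c *m GHmat p ts)%R | c : 'rV_(sumn ts)].
Proof. by rewrite /GH /GHlin -imset_comp. Qed.

Lemma equiv_codes_row_perm p N1 N2 (I1 I2 : finType)
    (E1 : I1 -> 'rV['Z_p]_N1) (E2 : I2 -> 'rV['Z_p]_N2) (f : 'I_N2 -> 'I_N1) :
    bijective f ->
    (forall c, exists d, E2 d = (\row_i E1 c ord0 (f i))%R) ->
    (forall d, exists c, E2 d = (\row_i E1 c ord0 (f i))%R) ->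
  equiv_codes [set E1 c | c : I1] [set E2 d | d : I2].
Proof.
move=> f_bij E1_in E2_in; exists 0%R, f; split=> //; apply/setP => v.
apply/imsetP/imsetP => [[d _ ->] | [_ /imsetP [c _ ->] ->]].
  by have [c ->] := E2_in d; exists (E1 c); rewrite ?add0r ?imset_f.
by have [d <-] := E1_in c; exists d; rewrite ?add0r.
Qed.

Lemma equiv_codes_trans p N1 N2 N3 (C1 : {set 'rV['Z_p]_N1}) (C2 : {set 'rV['Z_p]_N2})
    (C3 : {set 'rV['Z_p]_N3}) :
  equiv_codes C1 C2 -> equiv_codes C2 C3 -> equiv_codes C1 C3.
Proof.
move=> [a2 [f [f_bij ->]]] [a3 [g [g_bij ->]]].
exists (a3 + \row_i a2 ord0 (g i))%R, (f \o g); split; first exact: bij_comp.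
apply/setP => w; apply/imsetP/imsetP => [[_ /imsetP [c1 c1_in ->] ->] | [c1 c1_in ->]].
  by exists c1 => //; apply/rowP => i; rewrite !mxE addrA.
exists (a2 + \row_i c1 ord0 (f i))%R; first exact: imset_f.
by apply/rowP => i; rewrite !mxE addrA.
Qed.

Section LiftStep.

Variables (p t1 : nat) (mid : seq nat) (tlast : nat).
Hypotheses (p_gt1 : 1 < p) (t1_gt0 : 0 < t1) (tlast_gt0 : 0 < tlast).

Local Notation n := (size mid).+1.
Local Notation tsA := (t1 :: rcons mid tlast).
Local Notation tsB := (1 :: t1.-1 :: rcons mid tlast.-1).
Local Notation W := (common_ranges p t1 mid tlast).
Local Notation m := (size W).

Let p_gt0 : 0 < p. Proof. exact: ltnW. Qed.

Lemma sumn_tsA : sumn tsA = m.+2.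
Proof. by rewrite -(size_coord_ranges p) // coord_ranges_rcons //= size_rcons. Qed.

Lemma sumn_tsB : sumn tsB = m.+1.
Proof. by rewrite -(size_coord_ranges p) // coord_ranges_lift /= size_map. Qed.

Lemma size_columns_tsA : size (columns p tsA) = size (cartprod W) * p.
Proof.
by rewrite columnsE coord_ranges_rcons // cartprod_cons1 cartprod_rcons size_map
  size_allpairs Tset_last size_map size_iota.
Qed.

Lemma size_columns_tsB : size (columns p tsB) = size (cartprod W).
Proof. by rewrite columnsE coord_ranges_lift cartprod_cons1 cartprod_map !size_map. Qed.

Lemma nth_columns_tsA q x : q < size (cartprod W) -> x < p ->
  nth [::] (columns p tsA) (q * p + x) = 1 :: rcons (nth [::] (cartprod W) q) (x * p ^ n).
Proof.
move=> ltq ltx; rewrite columnsE coord_ranges_rcons // cartprod_cons1 cartprod_rcons.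
have sizeT : size (Tset p n.+1 n.+1) = p by rewrite Tset_last size_map size_iota.
rewrite (nth_map [::]) ?size_allpairs ?sizeT //; last by nia.
rewrite -[X in q * X]sizeT (nth_allpairs _ [::] 0) ?sizeT //.
by rewrite Tset_last (nth_map 0) ?size_iota // nth_iota.
Qed.

Lemma nth_columns_tsB q : q < size (cartprod W) ->
  nth [::] (columns p tsB) q = 1 :: map (muln p) (nth [::] (cartprod W) q).
Proof.
move=> ltq; rewrite columnsE coord_ranges_lift cartprod_cons1 cartprod_map.
by rewrite (nth_map [::]) ?size_map // (nth_map [::]).
Qed.

Lemma shuffle_index_tsB_lt k : k < size (columns p tsB) * p ^ (size tsB).-1 ->
  shuffle_index p (p ^ n) k < size (columns p tsA) * p ^ (size tsA).-1.
Proof.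
rewrite size_columns_tsA size_columns_tsB /= !size_rcons (expnS p n) => ltk.
by rewrite shuffle_index_lt ?expn_gt0 ?p_gt0.
Qed.

Definition shuffle_ord (k : 'I_(size (columns p tsB) * p ^ (size tsB).-1)) :
  'I_(size (columns p tsA) * p ^ (size tsA).-1) := Ordinal (shuffle_index_tsB_lt (ltn_ord k)).

Lemma shuffle_ord_bij : bijective shuffle_ord.
Proof.
apply: inj_card_bij => [k1 k2 /(congr1 val) /shuffle_index_inj eq_k | ].
  by apply: val_inj; apply: eq_k; rewrite ?expn_gt0 ?p_gt0.
by rewrite !card_ord size_columns_tsA size_columns_tsB /= !size_rcons (expnS p n) mulnA.
Qed.

Definition lift_compatible (C D : nat -> nat) : Prop :=
  [/\ C 0 = D 0 %/ p %[mod p ^ n.+1], C m.+1 = D 0 %[mod p]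
     & forall i, i < m -> C i.+1 = D i.+1 %[mod p ^ n.+1]].

Lemma Phi_tsB_shuffle c d : lift_compatible (coefn c) (coefn d) ->
  Phi (d *m GHmat p tsB)%R = (\row_k Phi (c *m GHmat p tsA)%R ord0 (shuffle_ord k))%R.
Proof.
move=> compat_cd; apply/rowP => k; rewrite mxE !Phi_mulmx_GHmat //.
move: (coefn c) (coefn d) compat_cd => C D [eC0 eClast eC].
rewrite -[LHS]Zp_nat_mod // -[RHS]Zp_nat_mod //; congr (_%:R)%R.
have -> : nat_of_ord (shuffle_ord k) = shuffle_index p (p ^ n) k by [].
move: (nat_of_ord k) (ltn_ord k) => {}k; rewrite size_columns_tsB /= !size_rcons => ltk.
rewrite shuffle_index_divn ?shuffle_index_modn ?expn_gt0 ?p_gt0 // -expnS.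
have ltq : k %/ p ^ n.+1 < size (cartprod W) by rewrite ltn_divLR ?expn_gt0 ?p_gt0.
rewrite nth_columns_tsB // nth_columns_tsA ?ltn_pmod //.
by apply: gray_value_column_shift; rewrite ?(size_mem_cartprod (mem_nth _ ltq)).
Qed.

Lemma lift_compatible_tsA (c : 'rV['Z_(p ^ size tsA)]_(sumn tsA)) :
  exists d : 'rV['Z_(p ^ size tsB)]_(sumn tsB), lift_compatible (coefn c) (coefn d).
Proof.
pose F i := if i == 0 then coefn c m.+1 %% p + p * coefn c 0 else coefn c i.
exists (\row_i (F i)%:R)%R.
have ltpB : 1 < p ^ size tsB by rewrite -(exp1n (size tsB)) ltn_exp2r.
split=> [||i lti]; rewrite coefn_row ?sumn_tsB // /F /=; move: (coefn c) => C.
all: rewrite size_rcons.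
- rewrite (expnSr p n.+1) -modn_divl [_ + _]addnC mulnC divnMDl // divn_small ?ltn_pmod //.
  by rewrite addn0 modn_mod.
- by rewrite modn_dvdm ?dvdn_exp // -modnDmr modnMr addn0 modn_mod.
- by rewrite modn_dvdm // dvdn_exp2l.
Qed.

Lemma lift_compatible_tsB (d : 'rV['Z_(p ^ size tsB)]_(sumn tsB)) :
  exists c : 'rV['Z_(p ^ size tsA)]_(sumn tsA), lift_compatible (coefn c) (coefn d).
Proof.
pose G i := if i == 0 then coefn d 0 %/ p else if i == m.+1 then coefn d 0 %% p else coefn d i.
exists (\row_i (G i)%:R)%R.
have ltpA : 1 < p ^ n.+1 by rewrite -(exp1n n.+1) ltn_exp2r.
split=> [||i lti]; rewrite coefn_row ?sumn_tsA /= ?size_rcons // /G /=.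
- by rewrite modn_mod.
- by rewrite eqxx modn_dvdm ?dvdn_exp // modn_mod.
- by rewrite ltn_eqF // modn_mod.
- exact: ltnW.
Qed.

Lemma GH_lift_equiv : equiv_codes (GH p tsA) (GH p tsB).
Proof.
rewrite !GH_imset; apply: (equiv_codes_row_perm shuffle_ord_bij) => [c | d].
  by have [d compat_cd] := lift_compatible_tsA c; exists d; apply: Phi_tsB_shuffle.
by have [c compat_cd] := lift_compatible_tsB d; exists c; apply: Phi_tsB_shuffle.
Qed.

End LiftStep.

Theorem theorem4 (p t1 : nat) (mid : seq nat) (tlast l : nat) :
  prime p -> (1 <= t1)%N -> (1 <= tlast)%N -> (1 <= l <= tlast)%N ->
  equiv_codes (GH p (t1 :: rcons mid tlast))
              (GH p (1%N :: nseq l.-1 0%N ++ t1.-1 :: rcons mid (tlast - l))).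
Proof.
move=> /prime_gt1 p_gt1 t1_gt0 tlast_gt0 /andP [].
elim: l => [//|[|l] IHl] _ le_l; first by rewrite subn1; apply: GH_lift_equiv.
apply: equiv_codes_trans (IHl isT (ltnW le_l)) _.
have tlast_l_gt0 : 0 < tlast - l.+1 by rewrite subn_gt0.
have := GH_lift_equiv (t1 := 1) (nseq l 0 ++ t1.-1 :: mid) p_gt1 isT tlast_l_gt0.
by rewrite !rcons_cat /= -subnS.
Qed.
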